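(* The following two statements are equivalent: (a) every nearly finitary matroid is $k$-nearly finitary for some $k\in\mathbb{N}$; (b) for every matroid $M$ that is not $k$-nearly finitary for any $k\in\mathbb{N}$, the near finitarization $M^{\mathrm{nfin}}$ is not a matroid.
   Context: Matroids (possibly infinite) $(E,\mathcal{L})$: $\emptyset\in\mathcal{L}$; subsets of independent sets independent; if $B$ is maximal and $A$ non-maximal in $\mathcal{L}$, then $A\cup\{b\}\in\mathcal{L}$ for some $b\in B\setminus A$; for $A\in\mathcal{L}$, $A\subseteq X\subseteq E$, $\{S\in\mathcal{L}:A\subseteq S\subseteq X\}$ has a maximal element. Bases are maximal independent sets. The finitarization $M^{\mathrm{fin}}=(E,\mathcal{L}^{\mathrm{fin}})$: sets all of whose finite subsets lie in $\mathcal{L}$. The near finitarization $M^{\mathrm{nfin}}=(E,\mathcal{L}^{\mathrm{nfin}})$ with $\mathcal{L}^{\mathrm{nfin}}=\{F\in\mathcal{L}^{\mathrm{fin}}:\exists S\in\mathcal{L},\ S\subseteq F,\ |F\setminus S|<\infty\}$. $M$ is nearly finitary if $F\setminus B$ is finite whenever a base $F$ of $M^{\mathrm{fin}}$ contains a base $B$ of $M$; $k$-nearly finitary if $|F\setminus B|\le k$ for all such pairs. *)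

From Stdlib Require Import List.

Definition subset {E : Type} (A B : E -> Prop) : Prop := forall x, A x -> B x.

Definition finite_set {E : Type} (A : E -> Prop) : Prop :=
  exists l : list E, forall x, A x -> In x l.

Definition card_le {E : Type} (A : E -> Prop) (k : nat) : Prop :=
  exists l : list E, length l <= k /\ forall x, A x -> In x l.

Definition setD {E : Type} (A B : E -> Prop) : E -> Prop := fun x => A x /\ ~ B x.

Definition maximal_in {E : Type} (F : (E -> Prop) -> Prop) (S : E -> Prop) : Prop :=
  F S /\ forall T, F T -> subset S T -> subset T S.

(* Matroid axioms (I1)-(I3) and (IM) on ground set E (the whole type). *)
Definition is_matroid {E : Type} (L : (E -> Prop) -> Prop) : Prop :=
  L (fun _ => False) /\
  (forall A B, L B -> subset A B -> L A) /\
  (forall A B, maximal_in L B -> L A -> ~ maximal_in L A ->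
     exists b, B b /\ ~ A b /\ L (fun x => A x \/ x = b)) /\
  (forall A X, L A -> subset A X ->
     exists S, maximal_in (fun S => L S /\ subset A S /\ subset S X) S).

Definition is_base {E : Type} (L : (E -> Prop) -> Prop) (B : E -> Prop) : Prop :=
  maximal_in L B.

Definition Lfin {E : Type} (L : (E -> Prop) -> Prop) (F : E -> Prop) : Prop :=
  forall G, subset G F -> finite_set G -> L G.

Definition Lnfin {E : Type} (L : (E -> Prop) -> Prop) (F : E -> Prop) : Prop :=
  Lfin L F /\ exists S, L S /\ subset S F /\ finite_set (setD F S).

Definition nearly_finitary {E : Type} (L : (E -> Prop) -> Prop) : Prop :=
  forall F B, is_base (Lfin L) F -> is_base L B -> subset B F ->
    finite_set (setD F B).

Definition k_nearly_finitary {E : Type} (k : nat) (L : (E -> Prop) -> Prop) : Prop :=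
  forall F B, is_base (Lfin L) F -> is_base L B -> subset B F ->
    card_le (setD F B) k.

From Stdlib Require Import List Classical Lia FunctionalExtensionality PropExtensionality.
From mathcomp Require classical_sets.

(* For a matroid M, the near finitarization M^nfin is a matroid exactly when M is nearly
   finitary, so (a) and (b) are contrapositives of each other.

   If M is nearly finitary, every finitarily independent set is nearly independent (extend it
   to a base F of M^fin; a base of M|F is then a base of M, hence cofinite in F), so
   M^nfin = M^fin, and the finitarization of a matroid is a matroid. Conversely, if M^nfin is a
   matroid, a maximal nearly independent subset of a base F of M^fin is all of F, so F \ S is
   finite for some independent S. Extend S to a base B' of M; base exchange gives
   |B' \ B| <= |B \ B'| <= |F \ S|, and F \ B is covered by F \ S and B' \ B.

   Behind both uses of M^fin is one fact: two bases of a restriction M|W at finite distance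
   either both or neither stay independent when a point x outside W is added. *)

Section SetSystems.
Context {E : Type}.
Implicit Types (A B D F G K S T W X Y : E -> Prop) (P : (E -> Prop) -> Prop).

Definition setU1 A b : E -> Prop := fun x => A x \/ x = b.
Definition setD1 A b : E -> Prop := fun x => A x /\ x <> b.
Definition restrict (L : (E -> Prop) -> Prop) X : (E -> Prop) -> Prop :=
  fun S => L S /\ subset S X.

Lemma subset_setU1 A b : subset A (setU1 A b).
Proof. intros x Hx; left; exact Hx. Qed.

Lemma setU1_subset A X b : subset A X -> X b -> subset (setU1 A b) X.
Proof. intros HAX Hb x [Hx| ->]; [exact (HAX x Hx) | exact Hb]. Qed.

Lemma setU1S A B b : subset A B -> subset (setU1 A b) (setU1 B b).
Proof. intros HAB x [Hx|Hx]; [left; exact (HAB x Hx) | right; exact Hx]. Qed.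

Lemma setD1_subset_setU1 A K b : subset (setD1 A b) K -> subset A (setU1 K b).
Proof.
  intros HAK x Hx; destruct (classic (x = b)) as [->|Hxb]; [right; reflexivity|].
  left; exact (HAK x (conj Hx Hxb)).
Qed.

Lemma finite_subset A B : subset A B -> finite_set B -> finite_set A.
Proof. intros HAB [l Hl]; exists l; intros x Hx; exact (Hl x (HAB x Hx)). Qed.

Lemma finite_setU A B : finite_set A -> finite_set B -> finite_set (fun x => A x \/ B x).
Proof.
  intros [l Hl] [m Hm]; exists (l ++ m); intros x [Hx|Hx]; apply in_or_app; auto.
Qed.

Lemma finite_setU1 A b : finite_set A -> finite_set (setU1 A b).
Proof. intros [l Hl]; exists (b :: l); intros x [Hx| ->]; [right; auto | left; auto]. Qed.

Lemma finite_card_le A : finite_set A <-> exists n, card_le A n.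
Proof.
  split; [intros [l Hl]; exists (length l), l; auto | intros [n [l [_ Hl]]]; exists l; exact Hl].
Qed.

Lemma card_le_subset A B n : subset A B -> card_le B n -> card_le A n.
Proof.
  intros HAB [l [Hn Hl]]; exists l; split; [exact Hn|].
  intros x Hx; exact (Hl x (HAB x Hx)).
Qed.

Lemma card_le_empty A n : (forall x, ~ A x) -> card_le A n.
Proof. intros HA; exists nil; split; [simpl; lia | intros x Hx; destruct (HA x Hx)]. Qed.

Lemma card_le_setU1 A a n : card_le A n -> card_le (setU1 A a) (S n).
Proof.
  intros [l [Hn Hl]]; exists (a :: l); split; [simpl; lia|].
  intros x [Hx| ->]; [right; auto | left; auto].
Qed.

Lemma card_le_setD1 A a n : card_le A n -> A a -> exists m, n = S m /\ card_le (setD1 A a) m.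
Proof.
  intros [l [Hn Hl]] Ha.
  destruct (in_split a l (Hl a Ha)) as [l1 [l2 ->]].
  rewrite length_app in Hn; simpl in Hn.
  destruct n as [|m]; [lia|]; exists m; split; [reflexivity|].
  exists (l1 ++ l2); split; [rewrite length_app; lia|].
  intros x [Hx Hxa]; specialize (Hl x Hx).
  apply in_app_iff in Hl; apply in_app_iff; destruct Hl as [H|[H|H]]; auto; congruence.
Qed.

Lemma no_infinite_descent (Q : nat -> Prop) :
  (forall n, Q n -> exists m, n = S m /\ Q m) -> forall n, ~ Q n.
Proof.
  intros Hdesc n; induction n as [|n IH]; intros Hn;
    destruct (Hdesc _ Hn) as [m [Hm HQ]]; [discriminate | injection Hm as ->; exact (IH HQ)].
Qed.

Definition down_closed P := forall A B, P B -> subset A B -> P A.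

Definition augmentable P := forall A B,
  maximal_in P B -> P A -> ~ maximal_in P A -> exists b, B b /\ ~ A b /\ P (setU1 A b).

Lemma maximal_setU1 P B b : maximal_in P B -> P (setU1 B b) -> B b.
Proof. intros [_ HB] Hb; apply (HB _ Hb (subset_setU1 B b)); right; reflexivity. Qed.

Lemma maximal_of_setU1 P A :
  down_closed P -> P A -> (forall x, ~ A x -> ~ P (setU1 A x)) -> maximal_in P A.
Proof.
  intros Pdown HA Hno; split; [exact HA|].
  intros T HT HAT x Hx; apply NNPP; intros HAx.
  apply (Hno x HAx), (Pdown _ T HT), setU1_subset; assumption.
Qed.

Lemma not_maximal_setU1 P A :
  down_closed P -> P A -> ~ maximal_in P A -> exists x, ~ A x /\ P (setU1 A x).
Proof.
  intros Pdown HA HnA; apply NNPP; intros Hno; apply HnA, maximal_of_setU1;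
    [exact Pdown | exact HA|].
  intros x HAx HPx; apply Hno; exists x; split; assumption.
Qed.

Section BaseExchange.
Variable P : (E -> Prop) -> Prop.
Hypotheses (Pdown : down_closed P) (Paug : augmentable P).

Lemma maximal_of_no_augment K T :
  maximal_in P K -> P T -> (forall c, K c -> ~ T c -> ~ P (setU1 T c)) -> maximal_in P T.
Proof.
  intros HK HT Hno; apply NNPP; intros HnT.
  destruct (Paug T K HK HT HnT) as [c [Hc [HTc HPc]]]; exact (Hno c Hc HTc HPc).
Qed.

Lemma base_exchange A B a : maximal_in P A -> maximal_in P B -> A a -> ~ B a ->
  exists b, B b /\ ~ A b /\ maximal_in P (setU1 (setD1 A a) b).
Proof.
  intros HA HB Ha HBa.
  assert (HPAa : P (setD1 A a)) by (apply (Pdown _ A (proj1 HA)); intros x [Hx _]; exact Hx).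
  assert (HnAa : ~ maximal_in P (setD1 A a)).
  { intros [_ Hm]; destruct (Hm A (proj1 HA) (fun x Hx => proj1 Hx) a Ha) as [_ H];
      exact (H eq_refl). }
  destruct (Paug _ B HB HPAa HnAa) as [b [Hb [HAab HPb]]].
  assert (HAb : ~ A b) by (intros HAb; apply HAab; split; [exact HAb | congruence]).
  exists b; split; [exact Hb|]; split; [exact HAb|].
  apply (maximal_of_no_augment A); [exact HA | exact HPb|].
  intros c Hc Hnc HPc.
  assert (Hca : c = a) by (apply NNPP; intros Hca; apply Hnc; left; split; assumption).
  subst c; apply HAb, (maximal_setU1 P A b HA).
  apply (Pdown _ _ HPc); intros x [Hx| ->]; [|left; right; reflexivity].
  destruct (classic (x = a)) as [->|Hxa]; [right; reflexivity | left; left; split; assumption].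
Qed.

Lemma base_setD_card n A B : maximal_in P A -> maximal_in P B ->
  card_le (setD B A) n -> card_le (setD A B) n.
Proof.
  revert A; induction n as [|n IH]; intros A HA HB HBA.
  - apply card_le_empty; intros a [Ha HBa].
    destruct (base_exchange A B a HA HB Ha HBa) as [b [Hb [HAb _]]].
    destruct (card_le_setD1 _ b _ HBA) as [m [Hm _]]; [split; assumption | discriminate].
  - destruct (classic (exists a, A a /\ ~ B a)) as [[a [Ha HBa]]|Hno].
    2: { apply card_le_empty; intros a Ha; apply Hno; exists a; exact Ha. }
    destruct (base_exchange A B a HA HB Ha HBa) as [b [Hb [HAb HA']]].
    destruct (card_le_setD1 _ b _ HBA) as [m [Hm HBA']]; [split; assumption|].
    injection Hm as <-.
    apply (card_le_subset _ (setU1 (setD (setU1 (setD1 A a) b) B) a)), card_le_setU1.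
    + intros x [Hx HBx]; destruct (classic (x = a)) as [->|Hxa]; [right; reflexivity|].
      left; split; [left; split |]; assumption.
    + apply (IH _ HA' HB), (card_le_subset _ (setD1 (setD B A) b)); [|exact HBA'].
      intros x [HBx Hx]; split; [split; [exact HBx|] | intros ->; apply Hx; right; reflexivity].
      intros HAx; apply Hx; left; split; [exact HAx | congruence].
Qed.

End BaseExchange.

Lemma finite_subset_chain_union (F : (E -> Prop) -> Prop) A G :
  classical_sets.total_on F subset -> finite_set G ->
  subset G (fun z => A z \/ exists2 S, F S & S z) ->
  exists2 S, F S \/ S = A & subset G (fun z => A z \/ S z).
Proof.
  intros Htot [l Hl]; revert G Hl; induction l as [|a l IH]; intros G Hl HG.
  { exists A; [right; reflexivity | intros z Hz; destruct (Hl z Hz)]. }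
  destruct (IH (setD1 G a)) as [S HS HGS].
  { intros z [Hz Hza]; destruct (Hl z Hz) as [->|H]; [congruence | exact H]. }
  { intros z [Hz _]; exact (HG z Hz). }
  assert (HGT : forall T, subset S (fun z => A z \/ T z) -> A a \/ T a ->
            subset G (fun z => A z \/ T z)).
  { intros T HST HTa z Hz; destruct (classic (z = a)) as [->|Hza]; [exact HTa|].
    destruct (HGS z (conj Hz Hza)) as [H|H]; [left; exact H | exact (HST z H)]. }
  assert (HSS : subset S (fun z => A z \/ S z)) by (intros z Hz; right; exact Hz).
  destruct (classic (G a)) as [Ga|Ga].
  2: { exists S; [exact HS|]; intros z Hz; apply HGS.
       split; [exact Hz | intros ->; exact (Ga Hz)]. }
  destruct (HG a Ga) as [HAa|[T HT HTa]].
  { exists S; [exact HS | exact (HGT S HSS (or_introl HAa))]. }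
  destruct HS as [HS| ->].
  - destruct (Htot S T HS HT) as [HST|HTS].
    + exists T; [left; exact HT | apply HGT; [|right; exact HTa]].
      intros z Hz; right; exact (HST z Hz).
    + exists S; [left; exact HS | exact (HGT S HSS (or_intror (HTS a HTa)))].
  - exists T; [left; exact HT | apply HGT; [intros z Hz; left; exact Hz | right; exact HTa]].
Qed.

Section Matroid.
Variable L : (E -> Prop) -> Prop.

Lemma Lfin_down : down_closed (Lfin L).
Proof. intros A B HB HAB G HGA HG; exact (HB G (fun x Hx => HAB x (HGA x Hx)) HG). Qed.

Lemma not_Lfin F : ~ Lfin L F -> exists G, subset G F /\ finite_set G /\ ~ L G.
Proof.
  intros HF; apply NNPP; intros Hno; apply HF; intros G HGF HG.
  apply NNPP; intros HLG; apply Hno; exists G; auto.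
Qed.

Lemma Lnfin_setU1 S z : Lnfin L S -> Lfin L (setU1 S z) -> Lnfin L (setU1 S z).
Proof.
  intros [_ [S' [HS' [HS'S HSS']]]] Hz; split; [exact Hz|].
  exists S'; split; [exact HS'|]; split; [intros x Hx; left; exact (HS'S x Hx)|].
  apply (finite_subset _ (setU1 (setD S S') z)), finite_setU1, HSS'.
  intros x [[Hx| ->] HS'x]; [left; split; assumption | right; reflexivity].
Qed.

Lemma Lfin_extend A X : Lfin L A -> subset A X ->
  exists S, maximal_in (fun S => Lfin L S /\ subset A S /\ subset S X) S.
Proof.
  intros HA HAX.
  (* Zorn's lemma is applied to the sets S with A ∪ S finitarily independent, so that
     the union of the empty chain is admissible. *)
  destruct (@classical_sets.Zorn_bigcup E
              (fun S => Lfin L (fun z => A z \/ S z) /\ subset S X)) as [S [[HS HSX] HSmax]].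
  - intros F HFP Htot; split.
    + intros G HG HGfin.
      destruct (finite_subset_chain_union F A G Htot HGfin HG) as [S [HS| ->] HGS].
      * exact (proj1 (HFP S HS) G HGS HGfin).
      * apply HA; [intros z Hz; destruct (HGS z Hz) as [H|H]; exact H | exact HGfin].
    + intros z [S HS Hz]; exact (proj2 (HFP S HS) z Hz).
  - exists (fun z => A z \/ S z); split.
    + split; [exact HS|]; split; [intros z Hz; left; exact Hz|].
      intros z [Hz|Hz]; [exact (HAX z Hz) | exact (HSX z Hz)].
    + intros T [HT [HAT HTX]] HST z Hz; apply NNPP; intros Hnz.
      apply (HSmax T).
      * split; [intros y Hy; apply HST; right; exact Hy|].
        intros HTS; apply Hnz; right; exact (HTS z Hz).
      * split; [|exact HTX]; apply (Lfin_down _ T HT).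
        intros y [Hy|Hy]; [exact (HAT y Hy) | exact Hy].
Qed.

Hypothesis HL : is_matroid L.

Lemma matroid_down : down_closed L.
Proof. exact (proj1 (proj2 HL)). Qed.

Lemma matroid_augmentable : augmentable L.
Proof. exact (proj1 (proj2 (proj2 HL))). Qed.

Lemma matroid_extend A X : L A -> subset A X ->
  exists K, maximal_in (restrict L X) K /\ subset A K.
Proof.
  intros HA HAX; destruct (proj2 (proj2 (proj2 HL)) A X HA HAX) as [K [[HK [HAK HKX]] Hmax]].
  exists K; split; [split; [split; assumption|] | exact HAK].
  intros T [HT HTX] HKT; apply Hmax; [|exact HKT].
  split; [exact HT|]; split; [intros x Hx; exact (HKT x (HAK x Hx)) | exact HTX].
Qed.

Lemma base_extend A : L A -> exists B, maximal_in L B /\ subset A B.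
Proof.
  intros HA.
  destruct (matroid_extend A (fun _ => True) HA (fun _ _ => I)) as [B [[[HB _] Hmax] HAB]].
  exists B; split; [split; [exact HB|] | exact HAB].
  intros T HT; apply Hmax; split; [exact HT | intros _ _; exact I].
Qed.

Lemma restrict_down X : down_closed (restrict L X).
Proof.
  intros A B [HB HBX] HAB; split; [exact (matroid_down _ _ HB HAB)|].
  intros x Hx; exact (HBX x (HAB x Hx)).
Qed.

Lemma maximal_restrict_subset X Y K :
  maximal_in (restrict L X) K -> subset K Y -> subset Y X -> maximal_in (restrict L Y) K.
Proof.
  intros [[HK _] Hmax] HKY HYX; split; [split; assumption|].
  intros T [HT HTY] HKT; apply Hmax; [|exact HKT].
  split; [exact HT | intros x Hx; exact (HYX x (HTY x Hx))].
Qed.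

Lemma restrict_base_spanning X B K :
  maximal_in L B -> subset B X -> maximal_in (restrict L X) K -> maximal_in L K.
Proof.
  intros HB HBX HK; apply (maximal_of_no_augment L matroid_augmentable B);
    [exact HB | exact (proj1 (proj1 HK))|].
  intros c Hc HKc HLc; apply HKc, (maximal_setU1 _ _ _ HK); split; [exact HLc|].
  apply setU1_subset; [exact (proj2 (proj1 HK)) | exact (HBX c Hc)].
Qed.

Lemma restrict_augmentable X : augmentable (restrict L X).
Proof.
  intros A B HB [HA HAX] HnA.
  destruct (not_maximal_setU1 _ A (restrict_down X) (conj HA HAX) HnA) as [x [HAx [HLx HAxX]]].
  assert (HxX : X x) by exact (HAxX x (or_intror eq_refl)).
  enough (exists b, B b /\ ~ A b /\ L (setU1 A b)) as [b [Hb [HAb HLb]]].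
  { exists b; split; [exact Hb|]; split; [exact HAb|]; split; [exact HLb|].
    exact (setU1_subset _ _ _ HAX (proj2 (proj1 HB) b Hb)). }
  (* Extend A + x to a base K of L inside A + x + Bs, where Bs is a base of L containing B;
     then add the part of K outside X both to B and to A. *)
  destruct (base_extend B (proj1 (proj1 HB))) as [Bs [HBs HBBs]].
  destruct (matroid_extend (setU1 A x) (fun y => setU1 A x y \/ Bs y) HLx
              (fun y Hy => or_introl Hy)) as [K [HKY HAK]].
  assert (HK : maximal_in L K)
    by exact (restrict_base_spanning _ Bs K HBs (fun y Hy => or_intror Hy) HKY).
  assert (HKX : forall y, K y -> ~ X y -> Bs y).
  { intros y Hy HyX; destruct (proj2 (proj1 HKY) y Hy) as [H|H];
      [destruct (HyX (HAxX y H)) | exact H]. }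
  assert (HT : maximal_in L (fun y => B y \/ (K y /\ ~ X y))).
  { apply (maximal_of_no_augment L matroid_augmentable K); [exact HK | |].
    - apply (matroid_down _ Bs (proj1 HBs)).
      intros y [Hy|[Hy HyX]]; [exact (HBBs y Hy) | exact (HKX y Hy HyX)].
    - intros c Hc HTc HLc.
      assert (HcX : X c) by (apply NNPP; intros HcX; apply HTc; right; split; assumption).
      apply HTc; left; apply (maximal_setU1 _ _ _ HB); split.
      + apply (matroid_down _ _ HLc), setU1S; intros y Hy; left; exact Hy.
      + exact (setU1_subset _ _ _ (proj2 (proj1 HB)) HcX). }
  pose (A0 := fun y => A y \/ (K y /\ ~ X y)).
  assert (HA0K : subset A0 K)
    by (intros y [Hy|[Hy _]]; [exact (HAK y (or_introl Hy)) | exact Hy]).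
  assert (HnA0 : ~ maximal_in L A0).
  { intros HA0; destruct (maximal_setU1 _ _ x HA0) as [Hx|[_ Hx]];
      [| exact (HAx Hx) | exact (Hx HxX)].
    apply (matroid_down _ K (proj1 HK)), setU1_subset;
      [exact HA0K | exact (HAK x (or_intror eq_refl))]. }
  destruct (matroid_augmentable A0 _ HT (matroid_down A0 K (proj1 HK) HA0K) HnA0)
    as [c [[Hc|Hc] [HA0c HLc]]]; [| destruct (HA0c (or_intror Hc))].
  exists c; split; [exact Hc|]; split; [intros HAc; exact (HA0c (or_introl HAc))|].
  apply (matroid_down _ _ HLc), setU1S; intros y Hy; left; exact Hy.
Qed.

Lemma restrict_base_setU1_indep W A x :
  maximal_in (restrict L W) A -> L (setU1 A x) -> maximal_in (restrict L (setU1 W x)) (setU1 A x).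
Proof.
  intros HA HLx; apply maximal_of_setU1; [exact (restrict_down _) | split|].
  { exact HLx. }
  { exact (setU1S _ _ x (proj2 (proj1 HA))). }
  intros z Hz [HLz HzW]; destruct (HzW z (or_intror eq_refl)) as [HWz| ->];
    [|exact (Hz (or_intror eq_refl))].
  apply Hz; left; apply (maximal_setU1 _ _ _ HA); split.
  - apply (matroid_down _ _ HLz), setU1S, subset_setU1.
  - exact (setU1_subset _ _ _ (proj2 (proj1 HA)) HWz).
Qed.

Lemma restrict_base_setU1_dep W K x :
  maximal_in (restrict L W) K -> ~ L (setU1 K x) -> maximal_in (restrict L (setU1 W x)) K.
Proof.
  intros HK HnLx; apply maximal_of_setU1; [exact (restrict_down _) | split|].
  { exact (proj1 (proj1 HK)). }
  { intros y Hy; left; exact (proj2 (proj1 HK) y Hy). }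
  intros z Hz [HLz HzW]; destruct (HzW z (or_intror eq_refl)) as [HWz| ->]; [|exact (HnLx HLz)].
  apply Hz, (maximal_setU1 _ _ _ HK); split; [exact HLz|].
  exact (setU1_subset _ _ _ (proj2 (proj1 HK)) HWz).
Qed.

(* If [setU1 K x] were dependent, then in [restrict L (setU1 W x)] the bases [setU1 A x] and
   [K] would differ by |A \ K| + 1 and |K \ A| elements, which base exchange forbids. *)
Lemma restrict_bases_setU1 W x A K : ~ W x ->
  maximal_in (restrict L W) A -> maximal_in (restrict L W) K -> finite_set (setD K A) ->
  L (setU1 A x) -> L (setU1 K x).
Proof.
  intros HWx HA HK HKA HLA; apply NNPP; intros HLK.
  assert (HA' := restrict_base_setU1_indep W A x HA HLA).
  assert (HK' := restrict_base_setU1_dep W K x HK HLK).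
  assert (HKx : ~ K x).
  { intros HKx; apply HLK, (matroid_down _ K (proj1 (proj1 HK))), setU1_subset;
      [intros y Hy; exact Hy | exact HKx]. }
  apply finite_card_le in HKA as [n Hn]; revert n Hn; apply no_infinite_descent; intros n Hn.
  destruct (card_le_setD1 (setD (setU1 A x) K) x n) as [m [-> Hm]].
  - apply (base_setD_card _ (restrict_down _) (restrict_augmentable _) n _ _ HA' HK').
    apply (card_le_subset _ (setD K A)); [|exact Hn].
    intros y [Hy HAy]; split; [exact Hy | intros H; exact (HAy (or_introl H))].
  - split; [right; reflexivity | exact HKx].
  - exists m; split; [reflexivity|].
    apply (base_setD_card _ (restrict_down _) (restrict_augmentable _) m _ _ HK HA).
    apply (card_le_subset _ (setD1 (setD (setU1 A x) K) x)); [|exact Hm].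
    intros y [Hy HKy]; split; [split; [left; exact Hy | exact HKy]|].
    intros ->; exact (HWx (proj2 (proj1 HA) x Hy)).
Qed.

Lemma finite_witness_not_Lfin_setU1 A D : finite_set D ->
  (forall b, D b -> ~ Lfin L (setU1 A b)) ->
  exists M, finite_set M /\ subset M A /\ forall b, D b -> ~ L (setU1 M b).
Proof.
  intros [l Hl] HD.
  enough (exists M, finite_set M /\ subset M A /\ forall b, In b l -> D b -> ~ L (setU1 M b))
    as [M [HM [HMA HMD]]].
  { exists M; split; [exact HM|]; split; [exact HMA|]; intros b Hb; exact (HMD b (Hl b Hb) Hb). }
  clear Hl; induction l as [|a l [M [HM [HMA HMD]]]].
  { exists (fun _ => False); split; [exists nil; intros _ []|].
    split; [intros _ [] | intros _ []]. }
  destruct (classic (D a)) as [Ha|Ha].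
  2: { exists M; split; [exact HM|]; split; [exact HMA|].
       intros b [->|Hb] HDb; [contradiction | exact (HMD b Hb HDb)]. }
  destruct (not_Lfin _ (HD a Ha)) as [G [HGA [HG HLG]]].
  exists (fun x => M x \/ (G x /\ A x)); split.
  { apply finite_setU; [exact HM | exact (finite_subset _ _ (fun x Hx => proj1 Hx) HG)]. }
  split; [intros x [Hx|[_ Hx]]; [exact (HMA x Hx) | exact Hx]|].
  intros b [->|Hb] HDb HLb; [apply HLG | apply (HMD b Hb HDb)]; apply (matroid_down _ _ HLb).
  - intros x Hx; destruct (HGA x Hx) as [HAx| ->]; [|right; reflexivity].
    left; right; split; assumption.
  - apply setU1S; intros x Hx; left; exact Hx.
Qed.

Lemma Lfin_augmentable : augmentable (Lfin L).
Proof.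
  intros A B HB HA HnA.
  destruct (not_maximal_setU1 _ A Lfin_down HA HnA) as [x [HAx HAxfin]].
  apply NNPP; intros Hno.
  assert (HnAB : forall b, B b -> ~ A b -> ~ Lfin L (setU1 A b))
    by (intros b Hb HAb HAbfin; apply Hno; exists b; auto).
  assert (HBx : ~ B x) by (intros HBx; exact (HnAB x HBx HAx HAxfin)).
  assert (HBxfin : ~ Lfin L (setU1 B x)) by (intros H; exact (HBx (maximal_setU1 _ _ _ HB H))).
  destruct (not_Lfin _ HBxfin) as [G [HGB [HG HLG]]].
  assert (HGxB : subset (setD1 G x) B)
    by (intros y [Hy Hyx]; destruct (HGB y Hy) as [H|H]; [exact H | contradiction]).
  assert (HGxfin : finite_set (setD1 G x)) by exact (finite_subset _ _ (fun y Hy => proj1 Hy) HG).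
  destruct (finite_witness_not_Lfin_setU1 A (fun b => setD1 G x b /\ ~ A b))
    as [M [HM [HMA HMdep]]].
  { apply (finite_subset _ _ (fun y Hy => proj1 Hy) HGxfin). }
  { intros b [Hb HAb]; exact (HnAB b (HGxB b Hb) HAb). }
  (* In the finite set W, the base A0 of [restrict L W] stays independent when x is added,
     while a base K containing G - x does not. *)
  pose (W := fun y => M y \/ setD1 G x y).
  assert (HWfin : finite_set W) by (apply finite_setU; assumption).
  pose (A0 := fun y => W y /\ A y).
  assert (HA0 : maximal_in (restrict L W) A0).
  { apply maximal_of_setU1; [exact (restrict_down W) | split|].
    - apply HA; [intros y [_ Hy]; exact Hy|].
      exact (finite_subset _ _ (fun y Hy => proj1 Hy) HWfin).
    - intros y [Hy _]; exact Hy.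
    - intros z Hz [HLz HzW]; assert (HWz := HzW z (or_intror eq_refl)).
      assert (HAz : ~ A z) by (intros HAz; exact (Hz (conj HWz HAz))).
      destruct HWz as [HMz|HGz]; [exact (HAz (HMA z HMz))|].
      apply (HMdep z (conj HGz HAz)), (matroid_down _ _ HLz), setU1S.
      intros y Hy; split; [left; exact Hy | exact (HMA y Hy)]. }
  destruct (matroid_extend (setD1 G x) W) as [K [HK HGxK]];
    [exact (proj1 HB _ HGxB HGxfin) | intros y Hy; right; exact Hy |].
  apply HLG, (matroid_down _ (setU1 K x)), setD1_subset_setU1, HGxK.
  apply (restrict_bases_setU1 W x A0 K); [| exact HA0 | exact HK | |].
  - intros [Hx|[_ Hx]]; [exact (HAx (HMA x Hx)) | exact (Hx eq_refl)].
  - exact (finite_subset _ _ (fun y Hy => proj2 (proj1 HK) y (proj1 Hy)) HWfin).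
  - apply HAxfin; [exact (setU1S _ _ x (fun y Hy => proj2 Hy))|].
    exact (finite_setU1 _ x (finite_subset _ _ (fun y Hy => proj1 Hy) HWfin)).
Qed.

Lemma Lfin_matroid : is_matroid (Lfin L).
Proof.
  split; [intros G HG _; exact (matroid_down _ _ (proj1 HL) HG)|].
  split; [exact Lfin_down|].
  split; [exact Lfin_augmentable | exact Lfin_extend].
Qed.

Lemma base_of_Lfin_base F B :
  maximal_in (Lfin L) F -> maximal_in (restrict L F) B -> maximal_in L B.
Proof.
  intros HF HB; apply maximal_of_setU1; [exact matroid_down | exact (proj1 (proj1 HB))|].
  intros y HBy HLy.
  assert (HFy : ~ F y).
  { intros HFy; apply HBy, (maximal_setU1 _ _ _ HB); split; [exact HLy|].
    exact (setU1_subset _ _ _ (proj2 (proj1 HB)) HFy). }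
  assert (HFyfin : ~ Lfin L (setU1 F y)) by (intros H; exact (HFy (maximal_setU1 _ _ _ HF H))).
  destruct (not_Lfin _ HFyfin) as [G [HGF [HG HLG]]].
  assert (HG0F : subset (setD1 G y) F)
    by (intros z [Hz Hzy]; destruct (HGF z Hz) as [H|H]; [exact H | contradiction]).
  assert (HG0fin : finite_set (setD1 G y)) by exact (finite_subset _ _ (fun z Hz => proj1 Hz) HG).
  pose (W := fun z => B z \/ setD1 G y z).
  destruct (matroid_extend (setD1 G y) W) as [K [HK HG0K]];
    [exact (proj1 HF _ HG0F HG0fin) | intros z Hz; right; exact Hz |].
  apply HLG, (matroid_down _ (setU1 K y)), setD1_subset_setU1, HG0K.
  apply (restrict_bases_setU1 W y B K); [| | exact HK | | exact HLy].
  - intros [H|[_ H]]; [exact (HBy H) | exact (H eq_refl)].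
  - apply (maximal_restrict_subset F); [exact HB | intros z Hz; left; exact Hz|].
    intros z [Hz|Hz]; [exact (proj2 (proj1 HB) z Hz) | exact (HG0F z Hz)].
  - apply (finite_subset _ (setD1 G y)); [|exact HG0fin].
    intros z [Hz HBz]; destruct (proj2 (proj1 HK) z Hz) as [H|H]; [contradiction | exact H].
Qed.

Lemma Lnfin_of_Lfin F : nearly_finitary L -> Lfin L F -> Lnfin L F.
Proof.
  intros HNF HF.
  destruct (Lfin_extend F (fun _ => True) HF (fun _ _ => I)) as [Fs [[HFs [HFFs _]] HFsmax]].
  assert (HFsb : maximal_in (Lfin L) Fs).
  { split; [exact HFs|]; intros T HT HFsT; apply HFsmax; [|exact HFsT].
    split; [exact HT|]; split; [intros x Hx; exact (HFsT x (HFFs x Hx)) | intros _ _; exact I]. }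
  destruct (matroid_extend (fun _ => False) Fs (proj1 HL) (fun _ H => False_ind _ H)) as [B [HB _]].
  destruct (HNF Fs B HFsb (base_of_Lfin_base Fs B HFsb HB) (proj2 (proj1 HB))) as [l Hl].
  split; [exact HF|]; exists (fun x => B x /\ F x); split.
  { apply (matroid_down _ B (proj1 (proj1 HB))); intros x [Hx _]; exact Hx. }
  split; [intros x [_ Hx]; exact Hx|].
  exists l; intros x [HFx HBx]; apply Hl; split; [exact (HFFs x HFx)|].
  intros HBx'; exact (HBx (conj HBx' HFx)).
Qed.

Lemma nearly_finitary_of_Lnfin_matroid : is_matroid (Lnfin L) -> nearly_finitary L.
Proof.
  intros [HN0 [HNdown [_ HNext]]] F B HF HB HBF.
  destruct (HNext (fun _ => False) F HN0 (fun _ H => False_ind _ H)) as [S HSmax].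
  destruct (proj1 HSmax) as [HS [_ HSF]].
  assert (HFS : subset F S).
  { intros z Hz; apply (maximal_setU1 _ _ _ HSmax); split; [|split; [intros _ []|]].
    - apply (Lnfin_setU1 _ _ HS), (Lfin_down _ F (proj1 HF)), setU1_subset; assumption.
    - exact (setU1_subset _ _ _ HSF Hz). }
  destruct (HNdown F S HS HFS) as [_ [S' [HS' [_ HFS']]]].
  destruct (base_extend S' HS') as [B' [HB' HS'B']].
  destruct (proj1 (finite_card_le _) HFS') as [n Hn].
  assert (HB'B : card_le (setD B' B) n).
  { apply (base_setD_card L matroid_down matroid_augmentable n B' B HB' HB).
    apply (card_le_subset _ (setD F S')); [|exact Hn].
    intros y [HBy HB'y]; split; [exact (HBF y HBy) | intros HS'y; exact (HB'y (HS'B' y HS'y))]. }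
  apply (finite_subset _ (fun y => setD F S' y \/ setD B' B y)).
  - intros y [HFy HBy]; destruct (classic (S' y)) as [HS'y|HS'y].
    + right; split; [exact (HS'B' y HS'y) | exact HBy].
    + left; split; assumption.
  - apply finite_setU; [exact HFS' | apply finite_card_le; exists n; exact HB'B].
Qed.

Theorem Lnfin_matroidP : is_matroid (Lnfin L) <-> nearly_finitary L.
Proof.
  split; [exact nearly_finitary_of_Lnfin_matroid|]; intros HNF.
  replace (Lnfin L) with (Lfin L); [exact Lfin_matroid|].
  apply functional_extensionality; intros F; apply propositional_extensionality.
  split; [exact (Lnfin_of_Lfin F HNF) | intros [HF _]; exact HF].
Qed.

End Matroid.
End SetSystems.

Theorem theorem4p1p2 :
  (forall (E : Type) (L : (E -> Prop) -> Prop),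
      is_matroid L -> nearly_finitary L -> exists k : nat, k_nearly_finitary k L)
  <->
  (forall (E : Type) (L : (E -> Prop) -> Prop),
      is_matroid L -> (forall k : nat, ~ k_nearly_finitary k L) ->
      ~ is_matroid (Lnfin L)).
Proof.
  split.
  - intros Ha E L HL Hk HN.
    destruct (Ha E L HL (proj1 (Lnfin_matroidP L HL) HN)) as [k Hk'].
    exact (Hk k Hk').
  - intros Hb E L HL HNF; apply NNPP; intros Hno.
    apply (Hb E L HL); [intros k Hk; apply Hno; exists k; exact Hk|].
    exact (proj2 (Lnfin_matroidP L HL) HNF).
Qed.
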